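(* There exist continuous functions $f_1,f_2:\mathrm{SO}(2)\to\mathbb{R}$ such that for every rotation $R\in\mathrm{SO}(2)$, at least one of $f_1(R)$ and $f_2(R)$ is a correct rotation angle of $R$, i.e. $\rho(f_1(R))=R$ or $\rho(f_2(R))=R$.
   Context: For $\theta\in\mathbb{R}$, $\rho(\theta)=\begin{bmatrix}\cos\theta&-\sin\theta\\ \sin\theta&\cos\theta\end{bmatrix}\in\mathrm{SO}(2)$ denotes the rotation of angle $\theta$. *)

From HB Require Import structures.
From mathcomp Require Import all_boot all_order all_algebra.
From mathcomp Require Import all_classical all_reals all_analysis.
Set Implicit Arguments. Unset Strict Implicit. Unset Printing Implicit Defensive.
Import Order.TTheory GRing.Theory Num.Theory.
Import numFieldTopology.Exports numFieldNormedType.Exports.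
Local Open Scope ring_scope.
Local Open Scope classical_set_scope.

Definition rho {R : realType} (t : R) : 'M[R]_2 :=
  \matrix_(i < 2, j < 2)
    if i == 0 then (if j == 0 then cos t else - sin t)
    else (if j == 0 then sin t else cos t).

Definition SO2 {R : realType} : set 'M[R]_2 :=
  [set A | A^T *m A = 1%:M /\ \det A = 1].

(* A rotation [[c, -s], [s, c]] with c >= 0 has the continuous angle
   2 atan (s / (1 + c)), by the tangent half-angle formulas.  Replacing c by
   |c| keeps this expression continuous on all of SO(2); it is a correct angle
   where c >= 0, and its supplement pi - 2 atan (s / (1 + |c|)) is a correct
   angle where c <= 0, since rho (pi - t) flips the sign of cos t only. *)
From HB Require Import structures.
From mathcomp Require Import all_boot all_order all_algebra.
From mathcomp Require Import all_classical all_reals all_analysis.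
From mathcomp Require Import ring.
Import Order.TTheory GRing.Theory Num.Theory.
Import numFieldTopology.Exports numFieldNormedType.Exports.
Local Open Scope ring_scope.
Local Open Scope classical_set_scope.

Lemma mulmx22E (R : comPzRingType) (A B : 'M[R]_2) i j :
  (A *m B) i j = A i 0 * B 0 j + A i 1 * B 1 j.
Proof.
rewrite mxE !big_ord_recr big_ord0 /= add0r.
have -> : widen_ord (leqnSn 1) ord_max = 0 :> 'I_2 by apply/val_inj.
have -> : ord_max = 1 :> 'I_2 by apply/val_inj.
by [].
Qed.

Lemma det_mx22 (R : comPzRingType) (A : 'M[R]_2) :
  \det A = A 0 0 * A 1 1 - A 0 1 * A 1 0.
Proof.
rewrite (expand_det_row _ 0) !big_ord_recr big_ord0 /= /cofactor !det_mx11 !mxE.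
have -> : widen_ord (leqnSn 1) ord_max = 0 :> 'I_2 by apply/val_inj.
have -> : lift 0 (0 : 'I_1) = 1 :> 'I_2 by apply/val_inj.
have -> : lift ord_max (0 : 'I_1) = 0 :> 'I_2 by apply/val_inj.
have -> : ord_max = 1 :> 'I_2 by apply/val_inj.
by rewrite expr0 expr1 /=; ring.
Qed.

Section SO2_entries.
Context {R : realType}.
Implicit Types (A : 'M[R]_2) (t : R).

Lemma SO2_coef A : SO2 A ->
  [/\ A 0 1 = - A 1 0, A 1 1 = A 0 0 & A 0 0 ^+ 2 + A 1 0 ^+ 2 = 1].
Proof.
move=> [AtA detA].
have := congr1 (fun M : 'M[R]_2 => M 0 0) AtA.
have := congr1 (fun M : 'M[R]_2 => M 0 1) AtA.
move: detA; rewrite det_mx22 /= !mulmx22E !mxE /= => detA col01 col00.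
have unit_col0 : A 0 0 ^+ 2 + A 1 0 ^+ 2 = 1 by rewrite !expr2.
(* Column 1 is orthogonal to the unit column 0, and its determinant with
   column 0 is 1: solve this linear system for A 0 1 and A 1 1. *)
split => //; apply/eqP; rewrite -subr_eq0; apply/eqP.
- transitivity (A 0 1 * (1 - (A 0 0 ^+ 2 + A 1 0 ^+ 2))
    + A 1 0 * (1 - (A 0 0 * A 1 1 - A 0 1 * A 1 0))
    + A 0 0 * (A 0 0 * A 0 1 + A 1 0 * A 1 1)); first ring.
  by rewrite unit_col0 detA col01; ring.
- transitivity (A 1 1 * (1 - (A 0 0 ^+ 2 + A 1 0 ^+ 2))
    - A 0 0 * (1 - (A 0 0 * A 1 1 - A 0 1 * A 1 0))
    + A 1 0 * (A 0 0 * A 0 1 + A 1 0 * A 1 1)); first ring.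
  by rewrite unit_col0 detA col01; ring.
Qed.

Lemma SO2_rho A t : SO2 A -> cos t = A 0 0 -> sin t = A 1 0 -> rho t = A.
Proof.
move=> /SO2_coef[A01 A11 _] cos_t sin_t; apply/matrixP => i j; rewrite !mxE.
have ord2 (k : 'I_2) : k = 0 \/ k = 1.
  by case: k => [[|[|//]] ?]; [left | right]; apply/val_inj.
by case: (ord2 i) => ->; case: (ord2 j) => -> /=; rewrite ?cos_t ?sin_t ?A01 ?A11.
Qed.

End SO2_entries.

Section double_atan.
Context {R : realType}.
Implicit Types x c s : R.

Lemma cos_sin_2atan x :
  cos (2 * atan x) = (1 - x ^+ 2) / (1 + x ^+ 2) /\
  sin (2 * atan x) = 2 * x / (1 + x ^+ 2).
Proof.
have cos2_atan : cos (atan x) ^+ 2 = (1 + x ^+ 2)^-1.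
  by rewrite cos_atan exprVn sqr_sqrtr // addr_ge0 ?sqr_ge0.
have cos_atan_neq0 : cos (atan x) != 0.
  by rewrite -sqrf_eq0 cos2_atan invr_eq0 gt_eqF // ltr_pwDl ?sqr_ge0.
have sin_atan : sin (atan x) = x * cos (atan x).
  by rewrite -{2}(atanK x) /tan mulfVK.
have -> : 2 * atan x = atan x + atan x by ring.
by rewrite cosD sinD sin_atan -cos2_atan; split; ring.
Qed.

Lemma cos_sin_2atan_half [c s] : c ^+ 2 + s ^+ 2 = 1 -> -1 < c ->
  cos (2 * atan (s / (1 + c))) = c /\ sin (2 * atan (s / (1 + c))) = s.
Proof.
move=> unit_cs c_gtN1.
have c1_neq0 : 1 + c != 0 by rewrite gt_eqF // -ltrBlDl sub0r.
have s2 : s ^+ 2 = (1 - c) * (1 + c).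
  by transitivity ((c ^+ 2 + s ^+ 2) - c ^+ 2); [ring | rewrite unit_cs; ring].
have den : 1 + (s / (1 + c)) ^+ 2 = 2 / (1 + c).
  by rewrite expr_div_n s2; field.
have [-> ->] := cos_sin_2atan (s / (1 + c)).
by rewrite den expr_div_n s2; split; field.
Qed.

End double_atan.

Section SO2_angle.
Context {R : realType}.
Implicit Types A : 'M[R]_2.

Definition rhalf_angle A : R := 2 * atan (A 1 0 / (1 + `|A 0 0|)).

Lemma continuous_rhalf_angle : continuous rhalf_angle.
Proof.
move=> A; apply: (continuousM (s := fun=> 2)); first exact: cst_continuous.
apply: continuous_comp; last exact: continuous_atan.
apply: (continuousM (s := fun B : 'M[R]_2 => B 1 0)); first exact: coord_continuous.
apply: continuousV; first by rewrite gt_eqF // ltr_pwDl.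
have norm_A00 : {for A, continuous (fun B : 'M[R]_2 => `|B 0 0|)}.
  apply: (continuous_comp (f := fun B : 'M[R]_2 => B 0 0)).
    exact: coord_continuous.
  exact: norm_continuous.
have one : {for A, continuous (fun=> 1 : R)} by exact: cst_continuous.
exact: continuousD one norm_A00.
Qed.

Lemma rho_rhalf_angle A : SO2 A -> 0 <= A 0 0 -> rho (rhalf_angle A) = A.
Proof.
move=> SO2A c_ge0; case/SO2_coef: (SO2A) => _ _ unit_col0.
have [cosE sinE] := cos_sin_2atan_half unit_col0 (lt_le_trans (ltrN10 R) c_ge0).
by rewrite /rhalf_angle ger0_norm //; apply: SO2_rho.
Qed.

Lemma rho_pi_sub_rhalf_angle A : SO2 A -> A 0 0 <= 0 ->
  rho (pi - rhalf_angle A) = A.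
Proof.
move=> SO2A c_le0; case/SO2_coef: (SO2A) => _ _ unit_col0.
have unitN_col0 : (- A 0 0) ^+ 2 + A 1 0 ^+ 2 = 1 by rewrite sqrrN.
have Nc_gtN1 : -1 < - A 0 0 by rewrite (lt_le_trans (ltrN10 R)) ?oppr_ge0.
have [cosE sinE] := cos_sin_2atan_half unitN_col0 Nc_gtN1.
rewrite /rhalf_angle ler0_norm //; apply: SO2_rho => //.
- by rewrite cosB cospi sinpi cosE; ring.
- by rewrite sinB cospi sinpi sinE; ring.
Qed.

End SO2_angle.

Theorem theorem4 (R : realType) :
  exists f1 f2 : 'M[R]_2 -> R,
    {within SO2, continuous f1} /\ {within SO2, continuous f2} /\
    (forall A : 'M[R]_2, SO2 A -> rho (f1 A) = A \/ rho (f2 A) = A).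
Proof.
exists (@rhalf_angle R), (fun A => pi - rhalf_angle A); split; [|split].
- exact/continuous_subspaceT/continuous_rhalf_angle.
- apply/continuous_subspaceT => A.
  have pi_cst : {for A, continuous (fun=> pi : R)} by exact: cst_continuous.
  exact: continuousB pi_cst (continuous_rhalf_angle A).
- move=> A SO2A; case: (lerP 0 (A 0 0)) => [c_ge0 | /ltW c_le0].
  + by left; apply: rho_rhalf_angle.
  + by right; apply: rho_pi_sub_rhalf_angle.
Qed.
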